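(* Let $q$ be a prime power. The maximum size of a substrongly orthogonal set of sudoku solutions of order $q^2$ is $q-1$, and this maximum is achieved.
   Context: A sudoku solution of order $n^2$ is an $n^2\times n^2$ array with entries in $\{0,\dots,n^2-1\}$ in which every symbol occurs exactly once in each row, column and canonical $n\times n$ subsquare. Rows/columns are numbered from $0$; large row $x_1$ is the subarray of rows $x_1n,\dots,x_1n+n-1$, large column $x_3$ the subarray of columns $x_3n,\dots,x_3n+n-1$. Two arrays of the same shape with symbol sets $A$, $B$ are orthogonal if upon superimposition every ordered pair in $A\times B$ appears exactly once (the number of cells equals $|A||B|$ in all uses). Each symbol $x=b_nn+b_1$ ($b_n,b_1\in\{0,\dots,n-1\}$) has radix digit $b_n$. The radix solution $R(M)$ records at each location the radix digit of the symbol of $M$; the composite solution $N_{ij}$ of $M_i,M_j$ has at each location the symbol $n\,r_i+r_j$, where $r_i,r_j$ are the entries of $R(M_i),R(M_j)$ there. A set $\{M_1,\dots,M_m\}$ of mutually orthogonal sudoku solutions of order $n^2$ is substrongly orthogonal if (i) every canonical $n\times n$ subsquare of each $R(M_i)$ is a Latin square, and (ii) for every ordered pair of distinct indices $i,j$: (a) $N_{ij}$ is a sudoku solution, (b) each large row of $R(M_i)$ is orthogonal to the corresponding large row of $M_j$, and (c) each large column of $R(M_i)$ is orthogonal to the corresponding large column of $M_j$. *)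

From mathcomp Require Import all_boot.
Set Implicit Arguments. Unset Strict Implicit. Unset Printing Implicit Defensive.

(* Arrays of order n^2: cells are pairs (row, column) in 'I_(n*n) * 'I_(n*n);
   entries are natural numbers (symbols are 0 .. n*n-1). *)
Definition cell (n : nat) := ('I_(n * n) * 'I_(n * n))%type.
Definition array (n : nat) := cell n -> nat.

Definition in_block n (a b : 'I_n) (c : cell n) : bool :=
  (c.1 %/ n == a) && (c.2 %/ n == b).
Definition large_row n (x1 : 'I_n) : {set cell n} := [set c : cell n | c.1 %/ n == x1].
Definition large_col n (x3 : 'I_n) : {set cell n} := [set c : cell n | c.2 %/ n == x3].

Definition orthogonal_on n (C : {set cell n}) (A B : array n) (kA kB : nat) :=
  forall a b, a < kA -> b < kB ->
    #|[set c in C | (A c == a) && (B c == b)]| = 1.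

Definition is_sudoku n (M : array n) :=
  [/\ forall c, M c < n * n,
      forall (r : 'I_(n * n)) s, s < n * n ->
        #|[set c : cell n | (c.1 == r) && (M c == s)]| = 1,
      forall (k : 'I_(n * n)) s, s < n * n ->
        #|[set c : cell n | (c.2 == k) && (M c == s)]| = 1 &
      forall (a b : 'I_n) s, s < n * n ->
        #|[set c : cell n | in_block a b c && (M c == s)]| = 1].

Definition radix n (M : array n) : array n := fun c => M c %/ n.
Definition composite n (Mi Mj : array n) : array n :=
  fun c => n * radix Mi c + radix Mj c.

Definition subsquares_latin n (A : array n) :=
  forall (a b : 'I_n) (i : 'I_n) s, s < n ->
    #|[set c : cell n | [&& in_block a b c, c.1 %% n == i & A c == s]]| = 1 /\
    #|[set c : cell n | [&& in_block a b c, c.2 %% n == i & A c == s]]| = 1.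

Definition substrongly_orthogonal n m (M : 'I_m -> array n) :=
  [/\ forall i, is_sudoku (M i),
      forall i j, i != j -> orthogonal_on setT (M i) (M j) (n * n) (n * n),
      forall i, subsquares_latin (radix (M i)) &
      forall i j, i != j ->
        [/\ is_sudoku (composite (M i) (M j)),
            forall x1 : 'I_n, orthogonal_on (large_row x1) (radix (M i)) (M j) n (n * n) &
            forall x3 : 'I_n, orthogonal_on (large_col x3) (radix (M i)) (M j) n (n * n)]].

Definition prime_power (q : nat) := exists p k, [/\ prime p, 0 < k & q = p ^ k].

From mathcomp Require Import all_boot all_algebra all_field.
From mathcomp Require Import ring zify.
Set Implicit Arguments. Unset Strict Implicit. Unset Printing Implicit Defensive.
Import GRing.Theory.

(* Identify F_q with {0, ..., q-1}, and a cell with its coordinates (x1, x2, x3, x4) in F_q^4: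
   large row, row inside it, large column, column inside it. For each nonzero alpha take the
   array whose radix digit is x1 + alpha x2 + alpha x3 + x4 and whose unit digit is
   a1(alpha) x1 + a2(alpha) x2 + a3(alpha) x3 + a4(alpha) x4. Every required property says that
   two cells agreeing in some coordinates and some digits coincide; taking differences, a few
   linear forms on F_q^4 must have trivial common kernel, which comes down to a 2 x 2
   determinant being nonzero. Admissible coefficients exist over every finite field (with a
   separate choice for q = 2, where there is a single alpha).

   For the bound, look at the top-left subsquare. Since it is Latin in R(M_i), the value of
   R(M_i) at (1, 0) recurs at some (0, c_i) with c_i <> 0. If c_i = c_j for i <> j, then N_ij
   takes equal values at (0, c_i) and (1, 0), two cells of one subsquare, so N_ij is not a
   sudoku. Hence i |-> c_i injects into {1, ..., q-1}. *)

Lemma card_fiber_inj (T : finType) (h : T -> nat) N :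
  #|T| = N -> (forall c, h c < N) -> injective h ->
  forall k, k < N -> #|[set c | h c == k]| = 1.
Proof.
move=> cardT hN hinj k kN.
have uniq_h : uniq (map h (enum T)) by rewrite (map_inj_uniq hinj) enum_uniq.
have sub_h : {subset map h (enum T) <= iota 0 N}.
  by move=> x /mapP [c _ ->]; rewrite mem_iota add0n hN.
have [|_ im_h] := uniq_min_size uniq_h sub_h.
  by rewrite size_iota size_map -cardE cardT.
have /mapP [c _ ->] : k \in map h (enum T) by rewrite im_h mem_iota.
apply/eqP/cards1P; exists c; apply/setP => c'; rewrite !inE.
by apply/eqP/eqP => [/hinj | ->].
Qed.

Definition numeral2 d a b := a * d + b.

Lemma numeral2_eq d a b a' b' :
  b < d -> b' < d -> (numeral2 d a b == numeral2 d a' b') = (a == a') && (b == b').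
Proof.
move=> bd b'd; apply/eqP/andP => [E | [/eqP -> /eqP ->] //].
have d0 : 0 < d by lia.
have := congr1 (divn^~ d) E; have := congr1 (modn^~ d) E; rewrite /numeral2.
by rewrite !divnMDl // !modnMDl !divn_small // !modn_small // !addn0 => -> ->.
Qed.

Lemma numeral2_inj d a b a' b' :
  b < d -> b' < d -> numeral2 d a b = numeral2 d a' b' -> a = a' /\ b = b'.
Proof. by move=> bd b'd /eqP; rewrite numeral2_eq // => /andP [/eqP -> /eqP ->]. Qed.

Lemma numeral2_lt d a b A : a < A -> b < d -> numeral2 d a b < A * d.
Proof. rewrite /numeral2; nia. Qed.

Lemma card_pair_fiber (T : finType) (key val : T -> nat) K V :
  #|T| = K * V -> (forall c, key c < K) -> (forall c, val c < V) ->
  (forall c c', key c = key c' -> val c = val c' -> c = c') ->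
  forall k v, k < K -> v < V -> #|[set c | (key c == k) && (val c == v)]| = 1.
Proof.
move=> cardT keyK valV inj k v kK vV.
have hinj : injective (fun c => numeral2 V (key c) (val c)).
  by move=> c c' /numeral2_inj [] // *; exact: inj.
rewrite -(card_fiber_inj cardT _ hinj (numeral2_lt kK vV)) => [|c]; last exact: numeral2_lt.
by apply: eq_card => c; rewrite !inE numeral2_eq.
Qed.

Section Coordinates.
Variable n : nat.
Implicit Types (c : cell n) (A B : array n).

Definition X1 c := c.1 %/ n.
Definition X2 c := c.1 %% n.
Definition X3 c := c.2 %/ n.
Definition X4 c := c.2 %% n.

Lemma card_cell : #|{: cell n}| = n * n * (n * n).
Proof. by rewrite card_prod card_ord. Qed.

Lemma X1_lt c : X1 c < n.
Proof. by rewrite ltn_divLR ?ltn_ord //; case: n c => [|k] [[]]. Qed.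
Lemma X2_lt c : X2 c < n.
Proof. by rewrite ltn_pmod //; case: n c => [|k] [[]]. Qed.
Lemma X3_lt c : X3 c < n.
Proof. by rewrite ltn_divLR ?ltn_ord //; case: n c => [|k] [_ []]. Qed.
Lemma X4_lt c : X4 c < n.
Proof. by rewrite ltn_pmod //; case: n c => [|k] [_ []]. Qed.

Lemma cell_eqX c c' :
  X1 c = X1 c' -> X2 c = X2 c' -> X3 c = X3 c' -> X4 c = X4 c' -> c = c'.
Proof.
case: c c' => [r k] [r' k']; rewrite /X1 /X2 /X3 /X4 /= => h1 h2 h3 h4; congr pair; apply: ord_inj.
  by rewrite (divn_eq r n) (divn_eq r' n) h1 h2.
by rewrite (divn_eq k n) (divn_eq k' n) h3 h4.
Qed.

Lemma sudoku_of_inj A :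
  (forall c, A c < n * n) ->
  (forall c c', X1 c = X1 c' -> X2 c = X2 c' -> A c = A c' -> c = c') ->
  (forall c c', X3 c = X3 c' -> X4 c = X4 c' -> A c = A c' -> c = c') ->
  (forall c c', X1 c = X1 c' -> X3 c = X3 c' -> A c = A c' -> c = c') ->
  is_sudoku A.
Proof.
move=> An inj_row inj_col inj_block; split => //.
- move=> r s sn; have row_inj c c' : c.1 = c'.1 :> nat -> A c = A c' -> c = c'.
    by move=> e; apply: inj_row; rewrite /X1 /X2 e.
  exact: (card_pair_fiber card_cell (fun c => ltn_ord c.1) An row_inj (ltn_ord r) sn).
- move=> k s sn; have col_inj c c' : c.2 = c'.2 :> nat -> A c = A c' -> c = c'.
    by move=> e; apply: inj_col; rewrite /X3 /X4 e.
  exact: (card_pair_fiber card_cell (fun c => ltn_ord c.2) An col_inj (ltn_ord k) sn).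
- move=> a b s sn.
  have key_lt c : numeral2 n (X1 c) (X3 c) < n * n.
    by apply: numeral2_lt; [exact: X1_lt | exact: X3_lt].
  have key_inj c c' : numeral2 n (X1 c) (X3 c) = numeral2 n (X1 c') (X3 c') -> A c = A c' -> c = c'.
    by case/numeral2_inj; [exact: X3_lt | exact: X3_lt | exact: inj_block].
  rewrite -(card_pair_fiber card_cell key_lt An key_inj (numeral2_lt (ltn_ord a) (ltn_ord b)) sn).
  by apply: eq_card => c; rewrite !inE numeral2_eq ?X3_lt.
Qed.

Lemma orthogonal_of_inj A B :
  (forall c, A c < n * n) -> (forall c, B c < n * n) ->
  (forall c c', A c = A c' -> B c = B c' -> c = c') ->
  orthogonal_on setT A B (n * n) (n * n).
Proof.
move=> An Bn inj a b an bn; rewrite -(card_pair_fiber card_cell An Bn inj an bn).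
by apply: eq_card => c; rewrite !inE.
Qed.

Lemma orthogonal_on_line_of_inj (X : cell n -> nat) A B (x : 'I_n) :
  (forall c, X c < n) -> (forall c, A c < n) -> (forall c, B c < n * n) ->
  (forall c c', X c = X c' -> A c = A c' -> B c = B c' -> c = c') ->
  orthogonal_on [set c | X c == x] A B n (n * n).
Proof.
move=> Xn An Bn inj a b an bn.
have key_lt c : numeral2 n (X c) (A c) < n * n by apply: numeral2_lt.
have key_inj c c' : numeral2 n (X c) (A c) = numeral2 n (X c') (A c') -> B c = B c' -> c = c'.
  by case/numeral2_inj => //; exact: inj.
rewrite -(card_pair_fiber card_cell key_lt Bn key_inj (numeral2_lt (ltn_ord x) an) bn).
by apply: eq_card => c; rewrite !inE numeral2_eq // andbA.
Qed.

Lemma subsquares_latin_of_inj A :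
  (forall c, A c < n) ->
  (forall c c', X1 c = X1 c' -> X3 c = X3 c' -> X2 c = X2 c' -> A c = A c' -> c = c') ->
  (forall c c', X1 c = X1 c' -> X3 c = X3 c' -> X4 c = X4 c' -> A c = A c' -> c = c') ->
  subsquares_latin A.
Proof.
have cardT : #|{: cell n}| = n * n * n * n by rewrite card_cell !mulnA.
have block_line (Y : cell n -> nat) (a b i : 'I_n) s :
    (forall c, Y c < n) -> (forall c, A c < n) ->
    (forall c c', X1 c = X1 c' -> X3 c = X3 c' -> Y c = Y c' -> A c = A c' -> c = c') ->
    s < n -> #|[set c | [&& in_block a b c, Y c == i & A c == s]]| = 1.
  move=> Yn An inj sn.
  have key_lt c : numeral2 n (numeral2 n (X1 c) (X3 c)) (Y c) < n * n * n.
    by do 2 apply: numeral2_lt => //; [exact: X1_lt | exact: X3_lt].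
  have key_inj c c' : numeral2 n (numeral2 n (X1 c) (X3 c)) (Y c) =
      numeral2 n (numeral2 n (X1 c') (X3 c')) (Y c') -> A c = A c' -> c = c'.
    case/numeral2_inj => // /numeral2_inj [] //; [exact: X3_lt | exact: X3_lt | exact: inj].
  have key_ab := numeral2_lt (numeral2_lt (ltn_ord a) (ltn_ord b)) (ltn_ord i).
  rewrite -(card_pair_fiber cardT key_lt An key_inj key_ab sn).
  by apply: eq_card => c; rewrite !inE !numeral2_eq ?X3_lt // andbA.
move=> An inj2 inj4 a b i s sn; split; apply: block_line => //; [exact: X2_lt | exact: X4_lt].
Qed.

End Coordinates.

Arguments X1 {n}.
Arguments X2 {n}.
Arguments X3 {n}.
Arguments X4 {n}.

Section UpperBound.
Variable n : nat.
Implicit Types (c : cell n) (A : array n).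

Lemma radix_lt A : is_sudoku A -> forall c, radix A c < n.
Proof. by case=> An _ _ _ c; rewrite ltn_divLR ?An //; case: n c => [|k] [[]]. Qed.

Lemma latin_column_inj A : subsquares_latin A -> (forall c, A c < n) ->
  forall c c', X1 c = X1 c' -> X3 c = X3 c' -> X4 c = X4 c' -> A c = A c' -> c = c'.
Proof.
move=> lat An c c' e1 e3 e4 eA.
have [_ /eq_leq/card_le1_eqP] :=
  lat (Ordinal (X1_lt c)) (Ordinal (X3_lt c)) (Ordinal (X4_lt c)) _ (An c).
by apply; rewrite !inE /in_block /=; move: e1 e3 e4; rewrite /X1 /X3 /X4 => -> -> ->;
  rewrite eA !eqxx.
Qed.

Lemma latin_row_hit A : subsquares_latin A -> (forall c, A c < n) ->
  forall c (i : 'I_n), exists c', [/\ X1 c' = X1 c, X3 c' = X3 c, X2 c' = i & A c' = A c].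
Proof.
move=> lat An c i.
have [one_in_row _] := lat (Ordinal (X1_lt c)) (Ordinal (X3_lt c)) i _ (An c).
have /eqP/cards1P [c' /setP/(_ c')] := one_in_row.
by rewrite !inE eqxx => /and3P [/andP [/eqP e1 /eqP e3] /eqP e2 /eqP eA]; exists c'.
Qed.

Lemma sudoku_block_inj A : is_sudoku A ->
  forall c c', X1 c = X1 c' -> X3 c = X3 c' -> A c = A c' -> c = c'.
Proof.
case=> An _ _ one_in_block c c' e1 e3 eA.
have /eq_leq/card_le1_eqP := one_in_block (Ordinal (X1_lt c)) (Ordinal (X3_lt c)) _ (An c).
by apply; rewrite !inE /in_block /=; move: e1 e3; rewrite /X1 /X3 => -> ->; rewrite eA !eqxx.
Qed.

Lemma substrongly_orthogonal_card m (M : 'I_m -> array n) :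
  1 < n -> substrongly_orthogonal M -> m <= n - 1.
Proof.
move=> n_gt1 [sud _ lat comp].
have nn_gt1 : 1 < n * n by nia.
pose c1 : cell n := (Ordinal nn_gt1, Ordinal (ltnW nn_gt1)).
have [c1X1 c1X2 c1X3 c1X4] : [/\ X1 c1 = 0, X2 c1 = 1, X3 c1 = 0 & X4 c1 = 0].
  by rewrite /X1 /X2 /X3 /X4 /= divn_small // modn_small // div0n mod0n.
have partner i : exists e : cell n,
    [/\ X1 e = 0, X2 e = 0, X3 e = 0, 0 < X4 e & radix (M i) e = radix (M i) c1].
  have [e [e1 e3 e2 eR]] := latin_row_hit (lat i) (radix_lt (sud i)) c1 (Ordinal (ltnW n_gt1)).
  exists e; split; rewrite ?e1 ?e2 ?e3 ?c1X1 ?c1X3 //; rewrite lt0n; apply/eqP => e4.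
  have e_c1 : e = c1.
    by apply: (latin_column_inj (lat i) (radix_lt (sud i)) e1 e3 _ eR); rewrite e4 c1X4.
  by move: e2; rewrite e_c1 c1X2.
have [e eP] := fin_all_exists partner.
have col_inj : injective (X4 \o e).
  move=> i j /= e4; apply/eqP/negPn/negP => ij.
  have [[e1 e2 e3 _ eRi] [e1' e2' e3' _ eRj]] := (eP i, eP j).
  have eij : e i = e j by apply: cell_eqX; rewrite ?e1 ?e2 ?e3 ?e1' ?e2' ?e3'.
  have [Nsud _ _] := comp i j ij.
  have e_c1 : e i = c1.
    apply: (sudoku_block_inj Nsud); rewrite ?e1 ?e3 //.
    by rewrite /composite eRi eij eRj.
  by move: e2; rewrite e_c1 c1X2.
have cols_sub : {subset map (X4 \o e) (enum 'I_m) <= iota 1 (n - 1)}.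
  move=> x /mapP [i _ ->]; have [_ _ _ pos _] := eP i.
  by rewrite mem_iota pos /=; have := X4_lt (e i); lia.
have := uniq_leq_size (etrans (map_inj_uniq col_inj _) (enum_uniq _)) cols_sub.
by rewrite size_map size_enum_ord size_iota.
Qed.

End UpperBound.

Section LinearForms.
Variable F : fieldType.
Local Open Scope ring_scope.

Definition radix_form (al d1 d2 d3 d4 : F) := d1 + al * d2 + al * d3 + d4.
Definition unit_form (b1 b2 b3 b4 d1 d2 d3 d4 : F) := b1 * d1 + b2 * d2 + b3 * d3 + b4 * d4.

Lemma det2_kernel0 (p q r s x y : F) : p * s - q * r != 0 ->
  p * x + q * y = 0 -> r * x + s * y = 0 -> x = 0 /\ y = 0.
Proof.
move=> det e1 e2.
have detx : (p * s - q * r) * x = s * (p * x + q * y) - q * (r * x + s * y) by ring.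
have dety : (p * s - q * r) * y = p * (r * x + s * y) - r * (p * x + q * y) by ring.
move: detx dety; rewrite e1 e2 !mulr0 subrr => /eqP + /eqP.
by rewrite !mulf_eq0 (negbTE det) => /eqP -> /eqP ->.
Qed.

Lemma sudoku_row_kernel (al b1 b2 b3 b4 d1 d2 d3 d4 : F) : al * b4 - b3 != 0 -> d1 = 0 -> d2 = 0 ->
  radix_form al d1 d2 d3 d4 = 0 -> unit_form b1 b2 b3 b4 d1 d2 d3 d4 = 0 -> d3 = 0 /\ d4 = 0.
Proof.
move=> det -> -> e1 e2.
apply: (det2_kernel0 (p := al) (q := 1) (r := b3) (s := b4)); rewrite ?mul1r //.
- by rewrite -e1 /radix_form; ring.
- by rewrite -e2 /unit_form; ring.
Qed.

Lemma sudoku_col_kernel (al b1 b2 b3 b4 d1 d2 d3 d4 : F) : b2 - al * b1 != 0 -> d3 = 0 -> d4 = 0 ->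
  radix_form al d1 d2 d3 d4 = 0 -> unit_form b1 b2 b3 b4 d1 d2 d3 d4 = 0 -> d1 = 0 /\ d2 = 0.
Proof.
move=> det -> -> e1 e2.
apply: (det2_kernel0 (p := 1) (q := al) (r := b1) (s := b2)); rewrite ?mul1r //.
- by rewrite -e1 /radix_form; ring.
- by rewrite -e2 /unit_form; ring.
Qed.

Lemma sudoku_box_kernel (al b1 b2 b3 b4 d1 d2 d3 d4 : F) : al * b4 - b2 != 0 -> d1 = 0 -> d3 = 0 ->
  radix_form al d1 d2 d3 d4 = 0 -> unit_form b1 b2 b3 b4 d1 d2 d3 d4 = 0 -> d2 = 0 /\ d4 = 0.
Proof.
move=> det -> -> e1 e2.
apply: (det2_kernel0 (p := al) (q := 1) (r := b2) (s := b4)); rewrite ?mul1r //.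
- by rewrite -e1 /radix_form; ring.
- by rewrite -e2 /unit_form; ring.
Qed.

Lemma latin_row_kernel (al d1 d2 d3 d4 : F) :
  d1 = 0 -> d2 = 0 -> d3 = 0 -> radix_form al d1 d2 d3 d4 = 0 -> d4 = 0.
Proof. by move=> -> -> ->; rewrite /radix_form !mulr0 !add0r. Qed.

Lemma latin_col_kernel (al d1 d2 d3 d4 : F) : al != 0 ->
  d1 = 0 -> d3 = 0 -> d4 = 0 -> radix_form al d1 d2 d3 d4 = 0 -> d2 = 0.
Proof.
move=> al0 -> -> ->; rewrite /radix_form !mulr0 !addr0 add0r => /eqP.
by rewrite mulf_eq0 (negbTE al0) => /eqP.
Qed.

Lemma radix_pair_kernel (al be d1 d2 d3 d4 : F) : al != be ->
  radix_form al d1 d2 d3 d4 = 0 -> radix_form be d1 d2 d3 d4 = 0 -> d3 = - d2 /\ d4 = - d1.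
Proof.
move=> al_be e1 e2.
have : (al - be) * (d2 + d3) = 0.
  by rewrite -[0]subr0 -{1}e1 -e2 /radix_form; ring.
move/eqP; rewrite mulf_eq0 subr_eq0 (negbTE al_be) addrC addr_eq0 => /eqP d3E.
split => //; apply/eqP; rewrite -addr_eq0 addrC; apply/eqP.
by rewrite -e1 /radix_form d3E; ring.
Qed.

Lemma composite_row_kernel (al be d1 d2 d3 d4 : F) : al != be -> d1 = 0 -> d2 = 0 ->
  radix_form al d1 d2 d3 d4 = 0 -> radix_form be d1 d2 d3 d4 = 0 -> d3 = 0 /\ d4 = 0.
Proof.
by move=> al_be d10 d20 /(radix_pair_kernel al_be) /[apply] [[-> ->]]; rewrite d10 d20 oppr0.
Qed.

Lemma composite_col_kernel (al be d1 d2 d3 d4 : F) : al != be -> d3 = 0 -> d4 = 0 ->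
  radix_form al d1 d2 d3 d4 = 0 -> radix_form be d1 d2 d3 d4 = 0 -> d1 = 0 /\ d2 = 0.
Proof.
move=> al_be -> -> /(radix_pair_kernel al_be) /[apply] [[/esym/eqP + /esym/eqP]].
by rewrite !oppr_eq0 => /eqP -> /eqP ->.
Qed.

Lemma composite_box_kernel (al be d1 d2 d3 d4 : F) : al != be -> d1 = 0 -> d3 = 0 ->
  radix_form al d1 d2 d3 d4 = 0 -> radix_form be d1 d2 d3 d4 = 0 -> d2 = 0 /\ d4 = 0.
Proof.
move=> al_be d10 -> /(radix_pair_kernel al_be) /[apply] [[/esym/eqP + ->]].
by rewrite oppr_eq0 d10 oppr0 => /eqP.
Qed.

Lemma large_row_kernel (al be b1 b2 b3 b4 d1 d2 d3 d4 : F) : al != be -> b2 != b3 -> d1 = 0 ->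
  radix_form al d1 d2 d3 d4 = 0 -> radix_form be d1 d2 d3 d4 = 0 ->
  unit_form b1 b2 b3 b4 d1 d2 d3 d4 = 0 -> [/\ d2 = 0, d3 = 0 & d4 = 0].
Proof.
move=> al_be b23 d10 /(radix_pair_kernel al_be) /[apply] [[d3E d4E]] e.
have : (b2 - b3) * d2 = 0 by rewrite -e /unit_form d3E d4E d10; ring.
move/eqP; rewrite mulf_eq0 subr_eq0 (negbTE b23) => /eqP d20.
by rewrite d3E d4E d10 d20 oppr0.
Qed.

Lemma large_col_kernel (al be b1 b2 b3 b4 d1 d2 d3 d4 : F) : al != be -> b1 != b4 -> d3 = 0 ->
  radix_form al d1 d2 d3 d4 = 0 -> radix_form be d1 d2 d3 d4 = 0 ->
  unit_form b1 b2 b3 b4 d1 d2 d3 d4 = 0 -> [/\ d1 = 0, d2 = 0 & d4 = 0].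
Proof.
move=> al_be b14 d30 /(radix_pair_kernel al_be) /[apply] [[d3E d4E]] e.
have d20 : d2 = 0 by apply/eqP; rewrite -oppr_eq0 -d3E d30.
have : (b1 - b4) * d1 = 0 by rewrite -e /unit_form d3E d4E d20; ring.
move/eqP; rewrite mulf_eq0 subr_eq0 (negbTE b14) => /eqP d10.
by rewrite d4E d10 d20 oppr0.
Qed.

Lemma orthogonal_kernel (al be b1 b2 b3 b4 c1 c2 c3 c4 d1 d2 d3 d4 : F) : al != be ->
  (b1 - b4) * (c2 - c3) - (b2 - b3) * (c1 - c4) != 0 ->
  radix_form al d1 d2 d3 d4 = 0 -> unit_form b1 b2 b3 b4 d1 d2 d3 d4 = 0 ->
  radix_form be d1 d2 d3 d4 = 0 -> unit_form c1 c2 c3 c4 d1 d2 d3 d4 = 0 ->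
  [/\ d1 = 0, d2 = 0, d3 = 0 & d4 = 0].
Proof.
move=> al_be det e1 eb e2 ec; have [d3E d4E] := radix_pair_kernel al_be e1 e2.
have [d10 d20] : d1 = 0 /\ d2 = 0.
  by apply: (det2_kernel0 det); [rewrite -eb | rewrite -ec]; rewrite /unit_form d3E d4E; ring.
by rewrite d3E d4E d10 d20 oppr0.
Qed.

End LinearForms.

Section Construction.
Variable F : finFieldType.
Variable n : nat.
Hypothesis cardF : #|F| = n.
Local Open Scope ring_scope.

Definition fld_of_nat (x : nat) : F := nth 0 (enum F) x.
Definition nat_of_fld (a : F) : nat := index a (enum F).

Lemma nat_of_fld_lt a : (nat_of_fld a < n)%N.
Proof. by rewrite -cardF cardE index_mem mem_enum. Qed.

Lemma nat_of_fldK : cancel nat_of_fld fld_of_nat.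
Proof. by move=> a; rewrite /fld_of_nat nth_index ?mem_enum. Qed.

Lemma fld_of_nat_inj x y : (x < n)%N -> (y < n)%N -> fld_of_nat x = fld_of_nat y -> x = y.
Proof.
rewrite -cardF cardE => xn yn.
by rewrite /fld_of_nat -{2}(index_uniq 0 xn (enum_uniq F)) => ->; rewrite index_uniq ?enum_uniq.
Qed.

Definition coord (X : cell n -> nat) c : F := fld_of_nat (X c).
Definition dcoord (X : cell n -> nat) c c' := coord X c - coord X c'.

Lemma dcoord_eq0 (X : cell n -> nat) c c' : X c = X c' -> dcoord X c c' = 0.
Proof. by rewrite /dcoord /coord => ->; rewrite subrr. Qed.

Lemma dcoord_cell c c' : dcoord X1 c c' = 0 -> dcoord X2 c c' = 0 ->
  dcoord X3 c c' = 0 -> dcoord X4 c c' = 0 -> c = c'.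
Proof.
rewrite /dcoord /coord => /subr0_eq e1 /subr0_eq e2 /subr0_eq e3 /subr0_eq e4.
by apply: cell_eqX; apply: fld_of_nat_inj;
  rewrite ?X1_lt ?X2_lt ?X3_lt ?X4_lt.
Qed.

Variables a1 a2 a3 a4 : F -> F.

Definition radix_digit al c := radix_form al (coord X1 c) (coord X2 c) (coord X3 c) (coord X4 c).
Definition unit_digit al c :=
  unit_form (a1 al) (a2 al) (a3 al) (a4 al) (coord X1 c) (coord X2 c) (coord X3 c) (coord X4 c).
Definition field_array al : array n :=
  fun c => numeral2 n (nat_of_fld (radix_digit al c)) (nat_of_fld (unit_digit al c)).

Lemma field_array_lt al c : (field_array al c < n * n)%N.
Proof. by apply: numeral2_lt; apply: nat_of_fld_lt. Qed.

Lemma radix_field_array al c : radix (field_array al) c = nat_of_fld (radix_digit al c).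
Proof.
rewrite /radix /field_array /numeral2 divnMDl; last by case: n (nat_of_fld_lt (radix_digit al c)).
by rewrite divn_small ?addn0 // nat_of_fld_lt.
Qed.

Lemma radix_field_array_lt al c : (radix (field_array al) c < n)%N.
Proof. by rewrite radix_field_array nat_of_fld_lt. Qed.

Lemma field_array_inj al c c' : field_array al c = field_array al c' ->
  radix_digit al c = radix_digit al c' /\ unit_digit al c = unit_digit al c'.
Proof.
by case/numeral2_inj; rewrite ?nat_of_fld_lt // => /(can_inj nat_of_fldK) -> /(can_inj nat_of_fldK).
Qed.

Lemma composite_field_array_inj al be c c' :
  composite (field_array al) (field_array be) c = composite (field_array al) (field_array be) c' ->
  radix_digit al c = radix_digit al c' /\ radix_digit be c = radix_digit be c'.
Proof.
rewrite /composite !radix_field_array ![(n * _)%N]mulnC.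
by case/numeral2_inj; rewrite ?nat_of_fld_lt // => /(can_inj nat_of_fldK) -> /(can_inj nat_of_fldK).
Qed.

Lemma radix_digit_eq al c c' : radix_digit al c = radix_digit al c' ->
  radix_form al (dcoord X1 c c') (dcoord X2 c c') (dcoord X3 c c') (dcoord X4 c c') = 0.
Proof.
move=> e; rewrite -(subrr (radix_digit al c')) -{1}e.
by rewrite /radix_digit /radix_form /dcoord; ring.
Qed.

Lemma unit_digit_eq al c c' : unit_digit al c = unit_digit al c' ->
  unit_form (a1 al) (a2 al) (a3 al) (a4 al)
    (dcoord X1 c c') (dcoord X2 c c') (dcoord X3 c c') (dcoord X4 c c') = 0.
Proof.
move=> e; rewrite -(subrr (unit_digit al c')) -{1}e.
by rewrite /unit_digit /unit_form /dcoord; ring.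
Qed.

Definition sudoku_coeffs := forall al, al != 0 ->
  [&& al * a4 al - a3 al != 0, a2 al - al * a1 al != 0 & al * a4 al - a2 al != 0].

Definition orthogonal_coeffs := forall al be, al != 0 -> be != 0 -> al != be ->
  [&& a2 be != a3 be, a1 be != a4 be &
      (a1 al - a4 al) * (a2 be - a3 be) - (a2 al - a3 al) * (a1 be - a4 be) != 0].

Lemma field_array_sudoku al : sudoku_coeffs -> al != 0 -> is_sudoku (field_array al).
Proof.
move=> coeffs /coeffs /and3P [row col box]; apply: sudoku_of_inj; first exact: field_array_lt.
- move=> c c' /dcoord_eq0 e1 /dcoord_eq0 e2 /field_array_inj [/radix_digit_eq r /unit_digit_eq u].
  have [e3 e4] := sudoku_row_kernel row e1 e2 r u.
  exact: dcoord_cell.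
- move=> c c' /dcoord_eq0 e3 /dcoord_eq0 e4 /field_array_inj [/radix_digit_eq r /unit_digit_eq u].
  have [e1 e2] := sudoku_col_kernel col e3 e4 r u.
  exact: dcoord_cell.
- move=> c c' /dcoord_eq0 e1 /dcoord_eq0 e3 /field_array_inj [/radix_digit_eq r /unit_digit_eq u].
  have [e2 e4] := sudoku_box_kernel box e1 e3 r u.
  exact: dcoord_cell.
Qed.

Lemma radix_field_array_latin al : al != 0 -> subsquares_latin (radix (field_array al)).
Proof.
move=> al0; apply: subsquares_latin_of_inj; first exact: radix_field_array_lt.
- move=> c c' /dcoord_eq0 e1 /dcoord_eq0 e3 /dcoord_eq0 e2.
  rewrite !radix_field_array => /(can_inj nat_of_fldK) /radix_digit_eq r.
  have e4 := latin_row_kernel e1 e2 e3 r.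
  exact: dcoord_cell.
- move=> c c' /dcoord_eq0 e1 /dcoord_eq0 e3 /dcoord_eq0 e4.
  rewrite !radix_field_array => /(can_inj nat_of_fldK) /radix_digit_eq r.
  have e2 := latin_col_kernel al0 e1 e3 e4 r.
  exact: dcoord_cell.
Qed.

Lemma field_arrays_orthogonal al be : orthogonal_coeffs -> al != 0 -> be != 0 -> al != be ->
  orthogonal_on setT (field_array al) (field_array be) (n * n) (n * n).
Proof.
move=> coeffs al0 be0 al_be; have /and3P [_ _ det] := coeffs _ _ al0 be0 al_be.
apply: orthogonal_of_inj; try exact: field_array_lt.
move=> c c' /field_array_inj [/radix_digit_eq r /unit_digit_eq u].
move=> /field_array_inj [/radix_digit_eq r' /unit_digit_eq u'].
have [e1 e2 e3 e4] := orthogonal_kernel al_be det r u r' u'.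
exact: dcoord_cell.
Qed.

Lemma composite_field_array_sudoku al be : al != be ->
  is_sudoku (composite (field_array al) (field_array be)).
Proof.
move=> al_be; apply: sudoku_of_inj.
- move=> c; rewrite /composite !radix_field_array mulnC.
  by apply: numeral2_lt; apply: nat_of_fld_lt.
- move=> c c' /dcoord_eq0 e1 /dcoord_eq0 e2
    /composite_field_array_inj [/radix_digit_eq r /radix_digit_eq r'].
  have [e3 e4] := composite_row_kernel al_be e1 e2 r r'.
  exact: dcoord_cell.
- move=> c c' /dcoord_eq0 e3 /dcoord_eq0 e4
    /composite_field_array_inj [/radix_digit_eq r /radix_digit_eq r'].
  have [e1 e2] := composite_col_kernel al_be e3 e4 r r'.
  exact: dcoord_cell.
- move=> c c' /dcoord_eq0 e1 /dcoord_eq0 e3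
    /composite_field_array_inj [/radix_digit_eq r /radix_digit_eq r'].
  have [e2 e4] := composite_box_kernel al_be e1 e3 r r'.
  exact: dcoord_cell.
Qed.

Lemma radix_field_array_large_row al be (x1 : 'I_n) : al != be -> a2 be != a3 be ->
  orthogonal_on (large_row x1) (radix (field_array al)) (field_array be) n (n * n).
Proof.
move=> al_be b23; apply: (orthogonal_on_line_of_inj (X := X1));
  [exact: X1_lt | exact: radix_field_array_lt | exact: field_array_lt |].
move=> c c' /dcoord_eq0 e1; rewrite !radix_field_array => /(can_inj nat_of_fldK) /radix_digit_eq r.
move=> /field_array_inj [/radix_digit_eq r' /unit_digit_eq u].
have [e2 e3 e4] := large_row_kernel al_be b23 e1 r r' u.
exact: dcoord_cell.
Qed.

Lemma radix_field_array_large_col al be (x3 : 'I_n) : al != be -> a1 be != a4 be ->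
  orthogonal_on (large_col x3) (radix (field_array al)) (field_array be) n (n * n).
Proof.
move=> al_be b14; apply: (orthogonal_on_line_of_inj (X := X3));
  [exact: X3_lt | exact: radix_field_array_lt | exact: field_array_lt |].
move=> c c' /dcoord_eq0 e3; rewrite !radix_field_array => /(can_inj nat_of_fldK) /radix_digit_eq r.
move=> /field_array_inj [/radix_digit_eq r' /unit_digit_eq u].
have [e1 e2 e4] := large_col_kernel al_be b14 e3 r r' u.
exact: dcoord_cell.
Qed.

Lemma field_arrays_substrongly_orthogonal m (alpha : 'I_m -> F) :
  sudoku_coeffs -> orthogonal_coeffs -> injective alpha -> (forall i, alpha i != 0) ->
  substrongly_orthogonal (fun i => field_array (alpha i)).
Proof.
move=> sud_coeffs orth_coeffs alpha_inj alpha0.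
have alpha_neq i j : i != j -> alpha i != alpha j by rewrite (inj_eq alpha_inj).
split=> [i | i j /alpha_neq | i | i j /alpha_neq al_be].
- exact: field_array_sudoku.
- exact: field_arrays_orthogonal.
- exact: radix_field_array_latin.
have /and3P [b23 b14 _] := orth_coeffs _ _ (alpha0 i) (alpha0 j) al_be.
split=> [|x1|x3].
- exact: composite_field_array_sudoku.
- exact: radix_field_array_large_row.
- exact: radix_field_array_large_col.
Qed.

End Construction.

Section Coefficients.
Variable F : finFieldType.
Local Open Scope ring_scope.

Lemma generic_field_coeffs (k : F) : k != 0 -> k != 1 ->
  sudoku_coeffs (fun=> 1) (fun al => k * al) (fun al => (k - 1) * al) (fun=> 0) /\
  orthogonal_coeffs (fun=> 1) (fun al => k * al) (fun al => (k - 1) * al) (fun=> 0).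
Proof.
move=> k0 k1; have k10 : k - 1 != 0 by rewrite subr_eq0.
split=> [al al0 | al be _ be0 al_be] /=.
  rewrite mulr0 !sub0r !oppr_eq0 !mulf_neq0 // andbT.
  by rewrite (_ : _ - _ = (k - 1) * al) ?mulf_neq0 //; ring.
rewrite -subr_eq0 (_ : k * be - (k - 1) * be = be) ?be0 ?oner_neq0 /=; last by ring.
by rewrite (_ : _ - _ = be - al) ?subr_eq0 1?eq_sym //; ring.
Qed.

Lemma two_element_field_coeffs : (forall x : F, x != 0 -> x = 1) ->
  sudoku_coeffs (fun _ : F => 0) (fun=> 1) (fun=> 1) (fun=> 0) /\
  orthogonal_coeffs (fun _ : F => 0) (fun=> 1) (fun=> 1) (fun=> 0).
Proof.
move=> all1; split=> [al _ | al be /all1 -> /all1 ->] /=; last by rewrite eqxx.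
by rewrite mulr0 sub0r subr0 oppr_eq0 oner_neq0.
Qed.

Lemma admissible_coeffs_exist : exists a1 a2 a3 a4 : F -> F,
  sudoku_coeffs a1 a2 a3 a4 /\ orthogonal_coeffs a1 a2 a3 a4.
Proof.
case: (pickP (fun k : F => (k != 0) && (k != 1))) => [k /andP [k0 k1] | no_k].
  by do 4 eexists; exact: generic_field_coeffs k0 k1.
have all1 (x : F) : x != 0 -> x = 1.
  by move=> x0; apply/eqP; move: (no_k x); rewrite x0 /= => /negbT; rewrite negbK.
by do 4 eexists; exact: two_element_field_coeffs all1.
Qed.

Lemma nonzero_enum : exists alpha : 'I_(#|F| - 1)%N -> F, injective alpha /\ forall i, alpha i != 0.
Proof.
have card_nz : (#|F| - 1)%N = #|[set~ 0 : F]| by rewrite cardsC1 subn1.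
exists (fun i => enum_val (cast_ord card_nz i)); split.
  by move=> i j /enum_val_inj /cast_ord_inj.
by move=> i; have := enum_valP (cast_ord card_nz i); rewrite !inE.
Qed.

Lemma substrongly_orthogonal_exist :
  exists M : 'I_(#|F| - 1)%N -> array #|F|, substrongly_orthogonal M.
Proof.
have [alpha [alpha_inj alpha0]] := nonzero_enum.
have [a1 [a2 [a3 [a4 [sud_coeffs orth_coeffs]]]]] := admissible_coeffs_exist.
exists (fun i => field_array a1 a2 a3 a4 (alpha i)).
exact: field_arrays_substrongly_orthogonal.
Qed.

End Coefficients.

Theorem theorem5p2 (q : nat) (hq : prime_power q) :
  (exists M : 'I_(q - 1) -> array q, substrongly_orthogonal M) /\
  (forall (m : nat) (M : 'I_m -> array q), substrongly_orthogonal M -> m <= q - 1).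
Proof.
case: hq => p [k [p_prime k_gt0 ->]].
have [F _ cardF] := pPrimePowerField p_prime k_gt0.
split; first by rewrite -cardF; exact: substrongly_orthogonal_exist.
move=> m M; apply: substrongly_orthogonal_card.
by rewrite -cardF; exact: finNzRing_gt1.
Qed.
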